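(* Let $H$ be a complex separable Hilbert space and let $\mathcal{G}$ be a countable group of unitary operators on $H$. Let $M$ and $K$ be wandering subspaces of $H$ for $\mathcal{G}$. If $\sum_{g \in \mathcal{G}} \oplus^{\perp} g(M) \subseteq \sum_{g \in \mathcal{G}} \oplus^{\perp} g(K)$, then $\dim(M) \le \dim(K)$.
   Context: A closed linear subspace $M$ of $H$ is a wandering subspace for a set $\mathcal{U}$ of unitary operators (containing the identity) if $U(M) \perp V(M)$ for all $U, V \in \mathcal{U}$ with $U \neq V$. For a wandering subspace $M$, $\sum_{g \in \mathcal{G}} \oplus^{\perp} g(M)$ denotes the closed orthogonal direct sum of the mutually orthogonal subspaces $g(M)$, $g \in \mathcal{G}$. *)

From HB Require Import structures.
From mathcomp Require Import all_boot all_order all_algebra.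
From mathcomp Require Import boolp classical_sets cardinality reals.
From mathcomp Require Import complex.
Set Implicit Arguments. Unset Strict Implicit. Unset Printing Implicit Defensive.
Import Order.TTheory GRing.Theory Num.Theory.
Local Open Scope ring_scope.
Local Open Scope classical_set_scope.
Local Open Scope complex_scope.

Section Hilbert.
Variables (R : realType) (V : lmodType R[i]) (ip : V -> V -> R[i]).

Definition is_inner_product : Prop :=
  [/\ forall (a : R[i]) (x y z : V), ip (a *: x + y) z = a * ip x z + ip y z,
      forall x y : V, ip y x = (ip x y)^*,
      forall x : V, 0 <= ip x x
    & forall x : V, ip x x = 0 -> x = 0].

Definition hnorm (x : V) : R := Num.sqrt (complex.Re (ip x x)).

Definition converges_to (u : nat -> V) (x : V) : Prop :=
  forall eps : R, 0 < eps -> exists N : nat, forall n, (N <= n)%N -> hnorm (u n - x) < eps.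

Definition cauchy_seq (u : nat -> V) : Prop :=
  forall eps : R, 0 < eps -> exists N : nat,
    forall m n, (N <= m)%N -> (N <= n)%N -> hnorm (u m - u n) < eps.

Definition hcomplete : Prop :=
  forall u : nat -> V, cauchy_seq u -> exists x, converges_to u x.

Definition hseparable : Prop :=
  exists D : set V, countable D /\
    forall x (eps : R), 0 < eps -> exists2 d, D d & hnorm (x - d) < eps.

Definition separable_hilbert : Prop :=
  [/\ is_inner_product, hcomplete & hseparable].

Definition lin_subspace (M : set V) : Prop :=
  [/\ M 0, forall x y, M x -> M y -> M (x + y)
    & forall (a : R[i]) x, M x -> M (a *: x)].

Definition norm_closed (M : set V) : Prop :=
  forall (u : nat -> V) x, (forall n, M (u n)) -> converges_to u x -> M x.

Definition closed_subspace (M : set V) : Prop := lin_subspace M /\ norm_closed M.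

Definition closed_span (A : set V) : set V :=
  [set x | forall S, closed_subspace S -> A `<=` S -> S x].

Definition unitary (U : V -> V) : Prop :=
  [/\ linear U, forall x y, ip (U x) (U y) = ip x y & forall y, exists x, U x = y].

Definition unitary_group (G : set (V -> V)) : Prop :=
  [/\ forall U, G U -> unitary U,
      G id,
      forall U W, G U -> G W -> G (U \o W)
    & forall U, G U -> exists2 W, G W & (U \o W = id /\ W \o U = id)].

Definition orth (A B : set V) : Prop := forall x y, A x -> B y -> ip x y = 0.

Definition wandering (G : set (V -> V)) (M : set V) : Prop :=
  closed_subspace M /\
  forall U W, G U -> G W -> U <> W -> orth (U @` M) (W @` M).

Definition orth_sum (G : set (V -> V)) (M : set V) : set V :=
  closed_span (\bigcup_(g in G) (g @` M)).

Definition orthonormal (B : set V) : Prop :=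
  (forall b, B b -> ip b b = 1) /\ (forall b c, B b -> B c -> b <> c -> ip b c = 0).

Definition orthonormal_basis (M B : set V) : Prop :=
  [/\ B `<=` M, orthonormal B & closed_span B = M].

(* dim(M) <= dim(K): Hilbert dimension = cardinality of an orthonormal basis *)
Definition hdim_le (M K : set V) : Prop :=
  forall BM BK, orthonormal_basis M BM -> orthonormal_basis K BK -> (BM #<= BK)%card.

End Hilbert.

From Pilot Require Import Defs.
From HB Require Import structures.
From mathcomp Require Import all_boot all_order all_algebra.
From mathcomp Require Import boolp classical_sets cardinality reals.
From mathcomp Require Import complex.
From mathcomp Require Import ring lra finmap.
Set Implicit Arguments. Unset Strict Implicit. Unset Printing Implicit Defensive.
Import Order.TTheory GRing.Theory Num.Theory.
Local Open Scope ring_scope.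
Local Open Scope classical_set_scope.
Local Open Scope complex_scope.

(* Fix orthonormal bases BM of M and BK of K.  As K is wandering, the
   translates g f (g in G, f in BK) form an orthonormal family whose closed span
   contains the closed span of the translates of M, hence BM.  For a finite set
   A in BM, approximating each e in A by combinations of translates gives
   finitely many translates u with  sum_e sum_u |<e, u>|^2 >= |A| (1 - eps).  Conversely
   |<e, g f>| = |<f, g^-1 e>|, and the vectors g^-1 e are orthonormal because M
   is wandering, so Bessel's inequality at each f in BK bounds the same sum by
   |BK|.  Thus every finite subset of BM has at most |BK| elements; if BK is
   infinite, BM is countable by separability. *)

Lemma big_seq_pad (M : nmodType) (I : eqType) (t s : seq I) (F : I -> M) :
  uniq t -> uniq s -> {subset t <= s} ->
  \sum_(i <- t) F i = \sum_(i <- s) (if i \in t then F i else 0).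
Proof.
move=> t_uniq s_uniq ts; rewrite -big_mkcond -big_filter; apply: perm_big.
apply: uniq_perm; rewrite ?filter_uniq // => i.
by rewrite mem_filter; apply/esym/andb_idr/ts.
Qed.

Lemma big_seq_partition (M : nmodType) (I J : eqType) (r : seq I) (s : seq J)
    (h : I -> J) (F : I -> M) :
  uniq s -> (forall i, i \in r -> h i \in s) ->
  \sum_(i <- r) F i = \sum_(j <- s) \sum_(i <- r | h i == j) F i.
Proof.
move=> s_uniq hr; rewrite [RHS](exchange_big_dep xpredT) //= big_seq [RHS]big_seq.
apply: eq_bigr => i ir; rewrite (eq_bigl (pred1 (h i))) => [|j]; last by rewrite eq_sym.
by rewrite -big_filter (filter_pred1_uniq s_uniq (hr _ ir)) big_seq1.
Qed.

Lemma big_seq_delta (S : pzSemiRingType) (I : eqType) (s : seq I) (F : I -> S) i :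
  uniq s -> i \in s -> \sum_(j <- s) F j * (i == j)%:R = F i.
Proof.
move=> s_uniq si; rewrite (bigD1_seq i) //= eqxx mulr1 big1 ?addr0 // => j.
by rewrite eq_sym => /negbTE->; rewrite mulr0.
Qed.

Section SquaredModulus.
Variable R : realType.

Definition sqmod (z : R[i]) : R := complex.Re (z * z^*).

Lemma sqmod_ge0 z : 0 <= sqmod z.
Proof. by have := mulcJ_ge0 z; rewrite lecE => /andP[]. Qed.

Lemma sqmod0 : sqmod 0 = 0.
Proof. by rewrite /sqmod mul0r. Qed.

Lemma sqmodJ z : sqmod z^* = sqmod z.
Proof. by case: z => a b; rewrite /sqmod /=; ring. Qed.

Lemma ge0_complexRe (z : R[i]) : 0 <= z -> z = (complex.Re z)%:C.
Proof. by move=> /ger0_Im; case: z => a b /= ->. Qed.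

End SquaredModulus.

Section InnerProduct.
Variables (R : realType) (V : lmodType R[i]) (ip : V -> V -> R[i]).
Hypothesis ipP : is_inner_product ip.

Definition sqnorm (x : V) : R := complex.Re (ip x x).

Let ipl (z : V) : {scalar V} := HB.pack (ip^~ z)
  (GRing.isLinear.Build _ _ _ _ (ip^~ z)
     (fun a x y => let: And4 ip_linear _ _ _ := ipP in ip_linear a x y z)).

Lemma ip0l z : ip 0 z = 0.
Proof. exact: (raddf0 (ipl z)). Qed.

Lemma ipDl x y z : ip (x + y) z = ip x z + ip y z.
Proof. exact: (raddfD (ipl z)). Qed.

Lemma ipBl x y z : ip (x - y) z = ip x z - ip y z.
Proof. exact: (raddfB (ipl z)). Qed.

Lemma ipZl a x z : ip (a *: x) z = a * ip x z.
Proof. exact: (scalarZ (ipl z)). Qed.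

Lemma ip_suml (I : Type) (s : seq I) (a : I -> R[i]) (w : I -> V) z :
  ip (\sum_(i <- s) a i *: w i) z = \sum_(i <- s) a i * ip (w i) z.
Proof. by rewrite [LHS](raddf_sum (ipl z)); apply: eq_bigr => i _; apply: ipZl. Qed.

Lemma ipC x y : ip y x = (ip x y)^*.
Proof. by case: ipP. Qed.

Lemma ipDr x y z : ip z (x + y) = ip z x + ip z y.
Proof. by rewrite !(ipC _ z) ipDl rmorphD. Qed.

Lemma ipBr x y z : ip z (x - y) = ip z x - ip z y.
Proof. by rewrite !(ipC _ z) ipBl rmorphB. Qed.

Lemma ipZr a x z : ip z (a *: x) = a^* * ip z x.
Proof. by rewrite !(ipC _ z) ipZl rmorphM. Qed.

Lemma ip_sumr (I : Type) (s : seq I) (a : I -> R[i]) (w : I -> V) z :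
  ip z (\sum_(i <- s) a i *: w i) = \sum_(i <- s) (a i)^* * ip z (w i).
Proof.
by rewrite ipC ip_suml rmorph_sum; apply: eq_bigr => j _; rewrite rmorphM /= (ipC z) conjcK.
Qed.

Lemma sqnorm_ge0 x : 0 <= sqnorm x.
Proof. by case: ipP => _ _ ip_ge0 _; have := ip_ge0 x; rewrite lecE => /andP[]. Qed.

Lemma ip_sqnorm x : ip x x = (sqnorm x)%:C.
Proof. by case: ipP => _ _ ip_ge0 _; apply: ge0_complexRe. Qed.

Lemma sqnorm0 : sqnorm 0 = 0.
Proof. by rewrite /sqnorm ip0l. Qed.

Lemma sqnormZ a x : sqnorm (a *: x) = sqmod a * sqnorm x.
Proof.
rewrite /sqnorm ipZl ipZr ip_sqnorm /sqmod.
by case: a => p q /=; ring.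
Qed.

Lemma sqnormN x : sqnorm (- x) = sqnorm x.
Proof. by rewrite -scaleN1r sqnormZ /sqmod rmorphN1 mulrNN mulr1 mul1r. Qed.

Lemma sqnormD_le x y : sqnorm (x + y) <= 2 * sqnorm x + 2 * sqnorm y.
Proof.
have parallelogram : ip (x + y) (x + y) + ip (x - y) (x - y) = ip x x *+ 2 + ip y y *+ 2.
  by rewrite !ipBl !ipBr !ipDl !ipDr; ring.
move: parallelogram => /(congr1 (@complex.Re R)); rewrite !raddfD /=.
have := sqnorm_ge0 (x - y); rewrite /sqnorm; lra.
Qed.

Lemma sqnormD_lt x y (e : R) : sqnorm x < e / 4 -> sqnorm y < e / 4 -> sqnorm (x + y) < e.
Proof. by move=> ? ?; apply: le_lt_trans (sqnormD_le x y) _; lra. Qed.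

Lemma orthonormal_ip (B : set V) u v :
  Defs.orthonormal ip B -> B u -> B v -> ip u v = (u == v)%:R.
Proof.
move=> [B1 B0] Bu Bv; have [<-|/eqP neq_uv] := eqVneq u v; first exact: B1.
exact: B0.
Qed.

Section Bessel.
Variables (I : eqType) (w : I -> V) (s : seq I).
Hypotheses (s_uniq : uniq s)
  (w_orthonormal : {in s &, forall i j, ip (w i) (w j) = (i == j)%:R}).

Lemma ip_sub_comb (d : I -> R[i]) x :
  ip (x - \sum_(i <- s) d i *: w i) (x - \sum_(i <- s) d i *: w i) =
  ip x x - \sum_(i <- s) ip x (w i) * (ip x (w i))^*
  + \sum_(i <- s) (ip x (w i) - d i) * (ip x (w i) - d i)^*.
Proof.
set y := \sum_(i <- s) _.
have ip_w_y i : i \in s -> ip (w i) y = (d i)^*.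
  move=> si; transitivity (\sum_(j <- s) (d j)^* * (i == j)%:R); last exact: big_seq_delta.
  by rewrite ip_sumr big_seq [RHS]big_seq; apply: eq_bigr => j sj; rewrite w_orthonormal.
have ip_y_y : ip y y = \sum_(i <- s) d i * (d i)^*.
  by rewrite ip_suml big_seq [RHS]big_seq; apply: eq_bigr => i si; rewrite ip_w_y.
have ip_y_x : ip y x = \sum_(i <- s) d i * (ip x (w i))^*.
  by rewrite ip_suml; apply: eq_bigr => i _; rewrite (ipC x).
have expand : \sum_(i <- s) (ip x (w i) - d i) * (ip x (w i) - d i)^* =
    \sum_(i <- s) ip x (w i) * (ip x (w i))^* - \sum_(i <- s) (d i)^* * ip x (w i)
    - \sum_(i <- s) d i * (ip x (w i))^* + \sum_(i <- s) d i * (d i)^*.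
  by rewrite -!sumrN -!big_split /=; apply: eq_bigr => i _; rewrite rmorphB; ring.
by rewrite !ipBl !ipBr ip_y_y ip_y_x ip_sumr expand; ring.
Qed.

Lemma sqnorm_sub_comb (d : I -> R[i]) x :
  sqnorm (x - \sum_(i <- s) d i *: w i) =
  sqnorm x - \sum_(i <- s) sqmod (ip x (w i)) + \sum_(i <- s) sqmod (ip x (w i) - d i).
Proof. by rewrite /sqnorm ip_sub_comb raddfD raddfB /= !raddf_sum. Qed.

Lemma bessel x : \sum_(i <- s) sqmod (ip x (w i)) <= sqnorm x.
Proof.
have := sqnorm_ge0 (x - \sum_(i <- s) ip x (w i) *: w i).
by rewrite sqnorm_sub_comb [X in _ + X]big1 ?addr0 ?subr_ge0 // => i _; rewrite subrr sqmod0.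
Qed.

Lemma sqnorm_sub_comb_ge (d : I -> R[i]) x :
  sqnorm x - \sum_(i <- s) sqmod (ip x (w i)) <= sqnorm (x - \sum_(i <- s) d i *: w i).
Proof. by rewrite sqnorm_sub_comb lerDl sumr_ge0 // => i _; apply: sqmod_ge0. Qed.

End Bessel.

Section Combinations.
Variables (I : eqType) (w : I -> V) (J : set I).

Definition comb_of (y : V) : Prop := exists (s : seq I) (d : I -> R[i]),
  [/\ uniq s, forall i, i \in s -> J i & y = \sum_(i <- s) d i *: w i].

Definition comb_closure (x : V) : Prop :=
  forall e : R, 0 < e -> exists2 y, comb_of y & sqnorm (x - y) < e.

Lemma comb_of0 : comb_of 0.
Proof. by exists [::], (fun=> 0); split => //; rewrite big_nil. Qed.

Lemma comb_of_w i : J i -> comb_of (w i).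
Proof.
move=> Ji; exists [:: i], (fun=> 1); split => //; last by rewrite big_seq1 scale1r.
by move=> j; rewrite inE => /eqP->.
Qed.

Lemma comb_ofD y1 y2 : comb_of y1 -> comb_of y2 -> comb_of (y1 + y2).
Proof.
move=> [s1 [d1 [s1_uniq s1J ->]]] [s2 [d2 [s2_uniq s2J ->]]].
pose s := undup (s1 ++ s2).
have s1s : {subset s1 <= s} by move=> i si; rewrite mem_undup mem_cat si.
have s2s : {subset s2 <= s} by move=> i si; rewrite mem_undup mem_cat si orbT.
exists s, (fun i => (if i \in s1 then d1 i else 0) + (if i \in s2 then d2 i else 0)).
split; first exact: undup_uniq.
  by move=> i; rewrite mem_undup mem_cat => /orP[/s1J|/s2J].
rewrite (big_seq_pad _ s1_uniq (undup_uniq _) s1s).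
rewrite (big_seq_pad _ s2_uniq (undup_uniq _) s2s) -big_split /=.
by apply: eq_bigr => i _; rewrite scalerDl; congr (_ + _); case: ifP; rewrite ?scale0r.
Qed.

Lemma comb_ofZ a y : comb_of y -> comb_of (a *: y).
Proof.
move=> [s [d [s_uniq sJ ->]]]; exists s, (fun i => a * d i); split => //.
by rewrite scaler_sumr; apply: eq_bigr => i _; rewrite scalerA.
Qed.

Lemma comb_closure_closed_subspace : closed_subspace ip comb_closure.
Proof.
split; first split.
- by move=> e e0; exists 0; rewrite ?subr0 ?sqnorm0 //; apply: comb_of0.
- move=> x y cx cy e e0; have e4 : 0 < e / 4 by lra.
  have [x' cx' ltx] := cx _ e4; have [y' cy' lty] := cy _ e4.
  exists (x' + y'); first exact: comb_ofD.
  by rewrite opprD addrACA; apply: sqnormD_lt.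
- move=> a x cx e e0.
  have a0 : 0 < sqmod a + 1 by have := sqmod_ge0 a; lra.
  have [y cy lty] := cx (e / (sqmod a + 1)) (divr_gt0 e0 a0).
  exists (a *: y); first exact: comb_ofZ.
  rewrite -scalerBr sqnormZ; move: lty; rewrite ltr_pdivlMr //.
  by have := sqmod_ge0 a; have := sqnorm_ge0 (x - y); nra.
- move=> u x cu ux e e0; have e4 : 0 < e / 4 by lra.
  have se4 : 0 < Num.sqrt (e / 4) by rewrite sqrtr_gt0.
  have [N /(_ N (leqnn N))] := ux _ se4; rewrite /hnorm ltr_sqrt // => ltN.
  have [y cy lty] := cu N _ e4; exists y => //.
  have -> : x - y = - (u N - x) + (u N - y) by rewrite opprB addrA subrK.
  by apply: sqnormD_lt; rewrite ?sqnormN.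
Qed.

Hypothesis w_orthonormal : forall i j, J i -> J j -> ip (w i) (w j) = (i == j)%:R.

Lemma comb_closure_approx x (e : R) : comb_closure x -> 0 < e ->
  exists2 s0 : seq I, (forall i, i \in s0 -> J i) &
    forall s, uniq s -> (forall i, i \in s -> J i) -> {subset s0 <= s} ->
      sqnorm x - \sum_(i <- s) sqmod (ip x (w i)) < e.
Proof.
move=> cx e0; have [_ [s0 [d [s0_uniq s0J ->]]] lte] := cx e e0.
exists s0 => // s s_uniq sJ s0s; apply: le_lt_trans lte.
rewrite (big_seq_pad _ s0_uniq s_uniq s0s).
rewrite (eq_bigr (fun i => (if i \in s0 then d i else 0) *: w i)) => [|i _]; last first.
  by case: ifP; rewrite ?scale0r.
by apply: sqnorm_sub_comb_ge => // i j /sJ Ji /sJ Jj; apply: w_orthonormal.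
Qed.

Lemma comb_closure_lower_bound (A : seq V) (e : R) : 0 < e ->
  (forall x, x \in A -> comb_closure x /\ sqnorm x = 1) ->
  exists2 s : seq I, uniq s /\ (forall i, i \in s -> J i) &
    (size A)%:R * (1 - e) <= \sum_(x <- A) \sum_(i <- s) sqmod (ip x (w i)).
Proof.
move=> e0 AP.
have /choice[s0 s0P] : forall x, exists s0 : seq I, x \in A ->
    (forall i, i \in s0 -> J i) /\
    forall s, uniq s -> (forall i, i \in s -> J i) -> {subset s0 <= s} ->
      sqnorm x - \sum_(i <- s) sqmod (ip x (w i)) < e.
  move=> x; have [xA|_] := boolP (x \in A); last by exists [::].
  by have [s0 ? ?] := comb_closure_approx (AP x xA).1 e0; exists s0.
pose s := undup (flatten (map s0 A)).
have s0s x : x \in A -> {subset s0 x <= s}.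
  by move=> xA i i0; rewrite mem_undup; apply/flattenP; exists (s0 x) => //; apply: map_f.
have sJ i : i \in s -> J i.
  by rewrite mem_undup => /flattenP[_ /mapP[x xA ->]]; apply: (s0P x xA).1.
exists s; first by split; first exact: undup_uniq.
have -> : (size A)%:R * (1 - e) = \sum_(x <- A) (1 - e).
  by rewrite big_const_seq count_predT iter_addr_0 mulr_natl.
rewrite big_seq [X in _ <= X]big_seq; apply: ler_sum => x xA.
have := (s0P x xA).2 s (undup_uniq _) sJ (s0s x xA).
by rewrite (AP x xA).2; lra.
Qed.

End Combinations.

Lemma closed_span_min (A S : set V) :
  closed_subspace ip S -> A `<=` S -> closed_span ip A `<=` S.
Proof. by move=> cS AS x /(_ S cS AS). Qed.

Lemma sub_closed_span (A : set V) : A `<=` closed_span ip A.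
Proof. by move=> x Ax S _ /(_ x Ax). Qed.

Lemma closed_subspace_preimage (g : V -> V) (S : set V) :
  unitary ip g -> closed_subspace ip S -> closed_subspace ip (g @^-1` S).
Proof.
move=> [g_lin g_ip _] [[S0 SD SZ] S_closed].
pose gL : {linear V -> V} := HB.pack g (GRing.isLinear.Build _ _ _ _ g g_lin).
have g0 : g 0 = 0 := raddf0 gL.
have gD x y : g (x + y) = g x + g y := raddfD gL x y.
have gB x y : g (x - y) = g x - g y := raddfB gL x y.
have gZ a x : g (a *: x) = a *: g x := linearZ_LR gL a x.
split; first split => /=.
- by rewrite g0.
- by move=> x y Sx Sy; rewrite gD; apply: SD.
- by move=> a x Sx; rewrite gZ; apply: SZ.
move=> u x Su ux; apply: (S_closed (g \o u)) => // e e0.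
have [N HN] := ux e e0; exists N => n Nn.
by rewrite /hnorm /= -gB g_ip; apply: HN.
Qed.

Lemma translate_ip (G : set (V -> V)) (M B : set V) g g' b b' :
  (forall h, G h -> unitary ip h) -> wandering ip G M ->
  Defs.orthonormal ip B -> B `<=` M ->
  G g -> G g' -> B b -> B b' -> ip (g b) (g' b') = ((g, b) == (g', b'))%:R.
Proof.
move=> G_unitary [_ M_wandering] B_on BM Gg Gg' Bb Bb'.
have [<-|neq_gg'] := eqVneq g g'.
  by have [_ g_ip _] := G_unitary g Gg; rewrite g_ip (orthonormal_ip B_on) // xpair_eqE eqxx.
rewrite xpair_eqE (negbTE neq_gg'); apply: (M_wandering g g') => //; first exact/eqP.
  by exists b => //; apply: BM.
by exists b' => //; apply: BM.
Qed.

End InnerProduct.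

Lemma unitary_group_inv (R : realType) (V : lmodType R[i]) (ip : V -> V -> R[i])
    (G : set (V -> V)) :
  unitary_group ip G ->
  exists inv, forall g, G g -> [/\ G (inv g), g \o inv g = id & inv g \o g = id].
Proof.
move=> [_ _ _ G_inv].
suff /choice[inv invP] : forall g, exists h, G g -> [/\ G h, g \o h = id & h \o g = id].
  by exists inv.
move=> g; have [Gg|nGg] := pselect (G g); last by exists id => /nGg.
by have [h Gh [gh hg]] := G_inv g Gg; exists h.
Qed.

Section WanderingTranslates.
Variables (R : realType) (V : lmodType R[i]) (ip : V -> V -> R[i]).
Hypothesis ipP : is_inner_product ip.
Variables (G : set (V -> V)) (inv : (V -> V) -> V -> V) (M K BM BK : set V).
Hypotheses (G_unitary : forall g, G g -> unitary ip g) (G_id : G id)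
  (invP : forall g, G g -> [/\ G (inv g), g \o inv g = id & inv g \o g = id]).
Hypotheses (M_wandering : wandering ip G M) (K_wandering : wandering ip G K).
Hypothesis sumMK : orth_sum ip G M `<=` orth_sum ip G K.
Hypotheses (BM_basis : orthonormal_basis ip M BM) (BK_basis : orthonormal_basis ip K BK).

(* Translates are indexed by the pairs (g, f); the classical [eqType] of
   [boolp] on functions lets these pairs be compared. *)
Let tr (p : (V -> V) * V) : V := p.1 p.2.
Let translates := [set p : (V -> V) * V | G p.1 /\ BK p.2].

Lemma inv_inj g g' : G g -> G g' -> inv g = inv g' -> g = g'.
Proof.
move=> Gg Gg' eq_inv; have [_ _ hg] := invP Gg; have [_ gh' _] := invP Gg'.
by rewrite -[g]/(id \o g) -gh' -[_ \o g]/(g' \o (inv g' \o g)) -eq_inv hg.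
Qed.

Lemma ip_inv g x y : G g -> ip x (g y) = ip (inv g x) y.
Proof.
move=> Gg; have [_ gh _] := invP Gg; have [_ g_ip _] := G_unitary Gg.
by rewrite -(g_ip (inv g x)); have /= -> := congr1 (@^~ x) gh.
Qed.

Lemma inv_translates_ip g g' e e' : G g -> G g' -> BM e -> BM e' ->
  ip (inv g e) (inv g' e') = ((g, e) == (g', e'))%:R.
Proof.
move=> Gg Gg' BMe BMe'; have [G_ig _ _] := invP Gg; have [G_ig' _ _] := invP Gg'.
case: BM_basis => BM_M BM_on _.
rewrite (translate_ip G_unitary M_wandering BM_on BM_M G_ig G_ig' BMe BMe') !xpair_eqE.
by congr ((_ && _)%:R); apply/eqP/eqP => [/(inv_inj Gg Gg')|->].
Qed.

Lemma translates_orthonormal p q :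
  translates p -> translates q -> ip (tr p) (tr q) = (p == q)%:R.
Proof.
case: p q => [g b] [g' b'] [/= Gg Bb] [/= Gg' Bb']; case: BK_basis => BK_K BK_on _.
exact: translate_ip G_unitary K_wandering BK_on BK_K Gg Gg' Bb Bb'.
Qed.

Lemma BM_comb_closure e : BM e -> comb_closure ip tr translates e.
Proof.
case: BM_basis BK_basis => BM_M _ _ [_ _ span_BK] BMe.
have closure_cs := comb_closure_closed_subspace ipP tr translates.
have sum_e : orth_sum ip G K e.
  by apply: sumMK; apply: sub_closed_span; exists id => //; exists e => //; apply: BM_M.
apply: closed_span_min sum_e => // _ [g Gg [k Kk <-]].
have : closed_span ip BK `<=` g @^-1` comb_closure ip tr translates.
  apply: closed_span_min; first exact: closed_subspace_preimage (G_unitary Gg) closure_cs.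
  move=> f BKf d d0; exists (tr (g, f)); first exact: comb_of_w.
  by rewrite subrr sqnorm0.
by rewrite span_BK; apply.
Qed.

Lemma translates_upper_bound (A B : seq V) (s : seq ((V -> V) * V)) :
  uniq A -> uniq B -> uniq s -> (forall e, e \in A -> BM e) ->
  (forall f, BK f <-> f \in B) -> (forall p, p \in s -> translates p) ->
  \sum_(e <- A) \sum_(p <- s) sqmod (ip e (tr p)) <= (size B)%:R.
Proof.
move=> A_uniq B_uniq s_uniq AM BKB sT.
set ps := [seq (p, e) | p <- s, e <- A].
have -> : \sum_(e <- A) \sum_(p <- s) sqmod (ip e (tr p)) =
    \sum_(q <- ps) sqmod (ip q.2 (tr q.1)) by rewrite exchange_big big_allpairs.
rewrite (@big_seq_partition _ _ _ ps B (fun q => q.1.2) _ B_uniq); last first.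
  by move=> q /allpairsP[[p e] [sp _ ->]]; apply/BKB; have [] := sT p sp.
have -> : (size B)%:R = \sum_(f <- B) 1 :> R by rewrite big_const_seq count_predT iter_addr_0.
rewrite big_seq [X in _ <= X]big_seq; apply: ler_sum => f fB.
have [_ [BK1 _] _] := BK_basis.
have -> : 1 = sqnorm ip f by rewrite /sqnorm BK1 //; apply/BKB.
rewrite -big_filter; set psf := filter _ ps.
have psfP q : q \in psf -> [/\ G q.1.1, q.1.2 = f & BM q.2].
  rewrite mem_filter => /andP[/eqP qf /allpairsP[[p e] [sp eA qE]]].
  by rewrite qE in qf *; have [] := sT p sp; split => //; apply: AM.
rewrite big_seq (eq_bigr (fun q => sqmod (ip f (inv q.1.1 q.2)))) -?big_seq.
  apply: (bessel ipP); first by rewrite filter_uniq // allpairs_uniq // => -[? ?] [? ?].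
  move=> [[g b] e] [[g' b'] e'] /psfP[/= Gg -> BMe] /psfP[/= Gg' -> BMe'].
  by rewrite inv_translates_ip // !xpair_eqE eqxx andbT.
move=> [[g b] e] /psfP[/= Gg -> _].
by rewrite /tr /= (ip_inv _ _ Gg) (ipC ipP) sqmodJ.
Qed.

Lemma size_BM_le (A B : seq V) : uniq A -> uniq B ->
  (forall e, e \in A -> BM e) -> (forall f, BK f <-> f \in B) -> (size A <= size B)%N.
Proof.
move=> A_uniq B_uniq AM BKB; rewrite leqNgt; apply/negP => ltBA.
(* With e = 1 / (|A| + 1) the lower bound |A| (1 - e) exceeds |A| - 1 >= |B|. *)
have A1_gt0 : 0 < (size A)%:R + 1 :> R by rewrite ltr_wpDl.
pose e : R := ((size A)%:R + 1)^-1.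
have e_gt0 : 0 < e by rewrite invr_gt0.
have eA1 : e * ((size A)%:R + 1) = 1 by rewrite mulVf // gt_eqF.
have [|s [s_uniq sT] lb] := comb_closure_lower_bound ipP translates_orthonormal e_gt0 (A := A).
  move=> x /AM BMx; split; first exact: BM_comb_closure.
  by case: BM_basis => _ [BM1 _] _; rewrite /sqnorm BM1.
have ub := translates_upper_bound A_uniq B_uniq s_uniq AM BKB sT.
have : (size B).+1%:R <= (size A)%:R :> R by rewrite ler_nat.
rewrite -natr1; move: (le_trans lb ub) eA1 e_gt0.
by move: (size A)%:R (size B)%:R => a b; nra.
Qed.

End WanderingTranslates.

Lemma orthonormal_countable (R : realType) (V : lmodType R[i]) (ip : V -> V -> R[i])
    (B : set V) :
  is_inner_product ip -> hseparable ip -> Defs.orthonormal ip B -> countable B.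
Proof.
move=> ipP [D [D_countable D_dense]] B_on.
have r_gt0 : 0 < Num.sqrt (1 / 4 : R) by rewrite sqrtr_gt0; lra.
have /choice[near nearP] :
    forall b, exists d, B b -> D d /\ hnorm ip (b - d) < Num.sqrt (1 / 4).
  by move=> b; have [d Dd bd] := D_dense b _ r_gt0; exists d.
have near_lt b : B b -> sqnorm ip (b - near b) < 1 / 4.
  by move=> Bb; have [_] := nearP b Bb; rewrite /hnorm ltr_sqrt //; lra.
have /countable_injP[code code_inj] := D_countable.
apply/countable_injP; exists (code \o near) => b c /set_mem Bb /set_mem Bc /= eq_code.
have eq_near : near b = near c.
  by apply: code_inj => //; apply: mem_set; [case: (nearP b Bb) | case: (nearP c Bc)].
(* Distinct vectors of B are at squared distance 2, whereas b and c both lie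
   within squared distance 1/4 of near b = near c. *)
have [//|neq_bc] := eqVneq b c.
have : sqnorm ip (b - c) = 2.
  rewrite /sqnorm !(ipBl ipP) !(ipBr ipP) !(orthonormal_ip B_on) //.
  by rewrite !eqxx (negbTE neq_bc) eq_sym (negbTE neq_bc) subr0 sub0r opprK.
have -> : b - c = (b - near b) + - (c - near c) by rewrite eq_near opprB addrA subrK.
have := near_lt c Bc; rewrite -(sqnormN ipP) => /(sqnormD_lt ipP (near_lt b Bb)).
by move=> lt1 eq2; move: lt1; rewrite eq2 ltrn1.
Qed.

Lemma card_le_fset_set (T : choiceType) (X Y : set T) : finite_set Y ->
  (forall A : {fset T}, [set` A] `<=` X -> (#|` A| <= #|` fset_set Y|)%N) -> (X #<= Y)%card.
Proof.
move=> Y_fin X_le; have [X_fin|X_inf] := pselect (finite_set X); last first.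
  have [A /X_le] := infinite_set_fset #|` fset_set Y|.+1 X_inf.
  by rewrite leqNgt => /negP.
have [m Xm] := X_fin; have [n Yn] := Y_fin.
rewrite (card_le_eql Xm) (card_le_eqr Yn) card_le_II -(card_fset_set Xm) -(card_fset_set Yn).
by apply: X_le => x /=; rewrite in_fset_set // in_setE.
Qed.

Theorem lemma2p1 (R : realType) (V : lmodType R[i]) (ip : V -> V -> R[i])
    (G : set (V -> V)) (M K : set V) :
  separable_hilbert ip ->
  unitary_group ip G -> countable G ->
  wandering ip G M -> wandering ip G K ->
  orth_sum ip G M `<=` orth_sum ip G K ->
  hdim_le ip M K.
Proof.
move=> [ipP _ H_sep] G_group _ M_wandering K_wandering sumMK BM BK BM_basis BK_basis.
have [inv invP] := unitary_group_inv G_group.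
have [G_unitary G_id _ _] := G_group.
have [BK_fin|BK_inf] := pselect (finite_set BK); last first.
  apply: card_le_trans (orthonormal_countable ipP H_sep _) _; first by case: BM_basis.
  exact/infiniteP.
apply: card_le_fset_set => // A ABM.
apply: (size_BM_le ipP G_unitary G_id invP M_wandering K_wandering sumMK BM_basis BK_basis).
- exact: fset_uniq.
- exact: fset_uniq.
- by move=> e eA; apply: ABM.
- by move=> f; rewrite in_fset_set // in_setE.
Qed.
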